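(* Let $\alpha>2$, $\lambda_e>0$, $0<\epsilon<1$, and $K_1=\pi\lambda_e\Gamma(1+\frac{2}{\alpha})\Gamma(1-\frac{2}{\alpha})$. Consider a network of $N_L$ legitimate nodes including a source $S$ and a destination $D$, in which each link $l$ between two nodes has a length $|D_l|>0$, and let $L_{SD}$ be the set of all paths (sequences of links through distinct nodes) from $S$ to $D$; for $L\in L_{SD}$ let $|L|$ be its number of hops. Put $T=\frac{\ln\frac{1}{1-\epsilon}}{K_1}$ and, for a path $L$ with $\sum_{l\in L}|D_l|^2<T$, $$M_t(L)=\frac{\alpha}{2|L|}\log_2\left(\frac{\ln\frac{1}{1-\epsilon}}{K_1\sum_{l\in L}|D_l|^2}\right),$$ with the convention $M_t(\varnothing)=-\infty$. Consider problem $\mathbf{P1}'$: maximize $M_t(L)$ over $L\in L_{SD}$ subject to $$\lambda_e<\frac{\ln\frac{1}{1-\epsilon}}{\pi\Gamma(1+\frac{2}{\alpha})\Gamma(1-\frac{2}{\alpha})\sum_{l\in L}|D_l|^2}$$ (equivalently $\sum_{l\in L}|D_l|^2<T$). For each $v\in\{1,\dots,N_L-1\}$ let $\tilde L_v$ be a minimizer of $\sum_{l\in L}|D_l|^2$ over all $L\in L_{SD}$ with $|L|\le v$ if this minimum exists and is strictly less than $T$, and $\tilde L_v=\varnothing$ otherwise. Then $\mathbf{P1}'$ is equivalent to problem $\mathbf{P2}$: $M_t(L^* )=\max_{1\le v\le N_L-1}M_t(\tilde L_v)$; that is, the optimal value of $\mathbf{P1}'$ equals $\max_{1\le v\le N_L-1}M_t(\tilde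 L_v)$ and a maximizing $\tilde L_v$ is an optimal path $L^*$ of $\mathbf{P1}'$.
   Context: Background: $M_t(L)$ is the secrecy rate $R_s^*/|L|$ of path $L$, where $R_s^*=\frac{\alpha}{2}\log_2\big(\ln\frac{1}{1-\epsilon}/(K_1\sum_{l\in L}|D_l|^2)\big)$ is the largest confidential-information rate for which the end-to-end secrecy outage probability $1-\exp[-K_1 2^{2R_s/\alpha}\sum_{l\in L}|D_l|^2]$ does not exceed $\epsilon$; the constraint in $\mathbf{P1}'$ is the requirement $R_s^*>0$. Here $\lambda_e$ is the density of the Poisson point process of eavesdroppers and $\alpha$ the path-loss exponent. *)

From HB Require Import structures.
From mathcomp Require Import all_boot all_order all_algebra.
From mathcomp Require Import all_classical all_reals all_analysis.
Set Implicit Arguments. Unset Strict Implicit. Unset Printing Implicit Defensive.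
Import Order.TTheory GRing.Theory Num.Theory.
Local Open Scope ring_scope.
Local Open Scope classical_set_scope.

Definition Gamma (R : realType) (s : R) : R :=
  fine (\int[@lebesgue_measure R]_(x in `]0%R, +oo[%classic) (x `^ (s - 1) * expR (- x))%:E)%E.

Definition log2 (R : realType) (x : R) : R := ln x / ln 2.

Definition K1 (R : realType) (alpha lambda_e : R) : R :=
  pi * lambda_e * Gamma (1 + 2 / alpha) * Gamma (1 - 2 / alpha).

(* A path is given by its node sequence s = [:: S; ...; D]; its links are
   the consecutive pairs. *)
Definition is_SD_path (V : finType) (e : rel V) (S D : V) (s : seq V) : bool :=
  [&& head D s == S, last S s == D, path e S (behead s), uniq s & 0 < size s]%N.

Definition hops (V : finType) (s : seq V) : nat := (size s).-1.

Definition sqlen (R : realType) (V : finType) (d : V -> V -> R) (s : seq V) : R :=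
  \sum_(p <- zip s (behead s)) (d p.1 p.2) ^+ 2.

Definition thrT (R : realType) (alpha lambda_e eps : R) : R :=
  ln ((1 - eps)^-1) / K1 alpha lambda_e.

Definition Mt (R : realType) (V : finType) (d : V -> V -> R)
    (alpha lambda_e eps : R) (L : option (seq V)) : \bar R :=
  match L with
  | None => -oo%E
  | Some s => (alpha / (2 * (hops s)%:R) *
      log2 (ln ((1 - eps)^-1) / (K1 alpha lambda_e * sqlen d s)))%:E
  end.

From HB Require Import structures.
From mathcomp Require Import all_boot all_order all_algebra.
From mathcomp Require Import all_classical all_reals all_analysis.
From mathcomp Require Import lra zify.
Import Order.TTheory GRing.Theory Num.Theory.
Local Open Scope ring_scope.
Local Open Scope classical_set_scope.

(* M_t decreases both in the number of hops and in the sum of squared link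
   lengths.  A feasible path L with |L| = v is therefore beaten by ~L_v, which
   has at most v hops and no larger squared length (and exists, since L itself
   is a candidate below the threshold T).  So every feasible value of M_t is
   below some M_t(~L_v), while every M_t(~L_v) other than -oo is itself a
   feasible value. *)

Lemma ereal_sup_eq_bigmax (R : realType) (T : Type) (A : set T)
    (f : T -> \bar R) (g : nat -> \bar R) (m n : nat) :
  (forall v, (m <= v < n)%N -> g v = -oo%E \/ (f @` A) (g v)) ->
  (forall s, A s -> exists2 v, (m <= v < n)%N & (f s <= g v)%E) ->
  ereal_sup (f @` A) = (\big[Order.max/-oo]_(m <= v < n) g v)%E.
Proof.
move=> g_attained f_dominated; apply/eqP; rewrite eq_le; apply/andP; split.
  apply: ge_ereal_sup => _ [s As <-].
  have [v v_mn /le_trans->//] := f_dominated s As.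
  by apply: le_bigmax_seq; rewrite ?mem_index_iota.
rewrite big_seq; apply: bigmax_le => [|v]; first exact: leNye.
rewrite mem_index_iota => /g_attained[->|gv]; first exact: leNye.
exact: ereal_sup_ubound.
Qed.

Lemma log2_gt0 (R : realType) (x : R) : 1 < x -> 0 < log2 x.
Proof. by move=> x_gt1; rewrite /log2 divr_gt0 // ln_gt0 // ltr1n. Qed.

Lemma ler_log2 (R : realType) (x y : R) :
  0 < x -> x <= y -> log2 x <= log2 y.
Proof.
move=> x_gt0 le_xy; have y_gt0 := lt_le_trans x_gt0 le_xy.
by rewrite /log2 ler_pM2r ?invr_gt0 ?ln_gt0 ?ltr1n // ler_ln ?posrE.
Qed.

Lemma ln_inv_1subr_gt0 (R : realType) (x : R) :
  0 < x < 1 -> 0 < ln ((1 - x)^-1).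
Proof. by case/andP=> x_gt0 x_lt1; rewrite ln_gt0 // invf_gt1; lra. Qed.

Section SDPaths.
Context {V : finType} {e : rel V} {S D : V}.
Hypothesis S_neq_D : S != D.

Lemma SD_path_cons2 {s : seq V} :
  is_SD_path e S D s -> exists x r, s = S :: x :: r /\ e S x.
Proof.
case: s => [|a [|b r]]; rewrite /is_SD_path /=.
- by case/and3P.
- by case/and3P=> /eqP-> /eqP S_D; move: S_neq_D; rewrite S_D eqxx.
- by case/and5P=> /eqP-> _ /andP[eSb _] _ _; exists b, r.
Qed.

Lemma SD_path_hops_bounds {s : seq V} :
  is_SD_path e S D s -> (1 <= hops s <= #|V| - 1)%N.
Proof.
move=> SDs; have [x [r [s_eq _]]] := SD_path_cons2 SDs.
case/and5P: SDs => _ _ _ uniq_s _.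
have := max_card (mem s); rewrite (card_uniqP uniq_s) /hops s_eq /=; lia.
Qed.

Lemma sqlen_SD_path_gt0 {R : realType} {d : V -> V -> R} {s : seq V} :
  (forall x y, e x y -> 0 < d x y) -> is_SD_path e S D s -> 0 < sqlen d s.
Proof.
move=> d_gt0 /SD_path_cons2[x [r [-> eSx]]].
rewrite /sqlen /= big_cons /= ltr_pwDl ?exprn_gt0 ?d_gt0 //.
by rewrite sumr_ge0 // => p _; apply: sqr_ge0.
Qed.

End SDPaths.

Lemma rate_antitone (R : realType) (a c K q1 q2 : R) (h1 h2 : nat) :
  0 < a -> 0 < K -> 0 < q1 -> q1 <= q2 -> K * q2 < c -> (0 < h1 <= h2)%N ->
  a / (2 * h2%:R) * log2 (c / (K * q2)) <= a / (2 * h1%:R) * log2 (c / (K * q1)).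
Proof.
move=> a_gt0 K_gt0 q1_gt0 le_q Kq2_lt /andP[h1_gt0 le_h].
have q2_gt0 := lt_le_trans q1_gt0 le_q.
have Kq_gt0 q : 0 < q -> 0 < K * q by move=> q_gt0; rewrite mulr_gt0.
have c_gt0 : 0 < c := lt_trans (Kq_gt0 _ q2_gt0) Kq2_lt.
have h2_gt0 := leq_trans h1_gt0 le_h.
apply: ler_pM.
- by rewrite divr_ge0 ?mulr_ge0 ?ler0n ?ltW.
- by rewrite ltW // log2_gt0 // ltr_pdivlMr ?Kq_gt0 // mul1r.
- by rewrite ler_pM2l // lef_pV2 ?posrE ?mulr_gt0 ?ltr0n // ler_pM2l ?ler_nat.
- by rewrite ler_log2 ?divr_gt0 ?Kq_gt0 // ler_pM2l // lef_pV2 ?posrE ?Kq_gt0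
    // ler_pM2l.
Qed.

Section SecrecyRate.
Variables (R : realType) (alpha lambda_e eps : R) (V : finType).
Variable d : V -> V -> R.
Hypotheses (alpha_gt0 : 0 < alpha) (eps_01 : 0 < eps < 1).

Lemma K1_gt0_of_below_thrT {q : R} :
  0 < q -> q < thrT alpha lambda_e eps -> 0 < K1 alpha lambda_e.
Proof.
move=> q_gt0 q_lt; rewrite ltNge; apply/negP => K1_le0.
have : thrT alpha lambda_e eps <= 0.
  by rewrite /thrT pmulr_rle0 ?ln_inv_1subr_gt0 // invr_le0.
lra.
Qed.

Lemma Mt_le (s t : seq V) :
  (0 < hops t <= hops s)%N -> 0 < sqlen d t -> sqlen d t <= sqlen d s ->
  sqlen d s < thrT alpha lambda_e eps ->
  (Mt d alpha lambda_e eps (Some s) <= Mt d alpha lambda_e eps (Some t))%E.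
Proof.
move=> hops_le qt_gt0 le_q qs_lt.
have K_gt0 := K1_gt0_of_below_thrT (lt_le_trans qt_gt0 le_q) qs_lt.
rewrite lee_fin rate_antitone //.
by move: qs_lt; rewrite /thrT ltr_pdivlMr // mulrC.
Qed.

End SecrecyRate.

Theorem theorem2 (R : realType) (alpha lambda_e eps : R)
  (V : finType) (e : rel V) (d : V -> V -> R) (S D : V)
  (Lt : nat -> option (seq V)) :
  2 < alpha -> 0 < lambda_e -> 0 < eps < 1 ->
  S != D ->
  (forall x y, e x y -> 0 < d x y) ->
  (* specification of tilde L_v for 1 <= v <= N_L - 1 *)
  (forall v : nat, (1 <= v <= #|V| - 1)%N ->
     match Lt v with
     | Some s =>
         [/\ is_SD_path e S D s, (hops s <= v)%N,
             sqlen d s < thrT alpha lambda_e eps &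
             forall s', is_SD_path e S D s' -> (hops s' <= v)%N ->
               sqlen d s <= sqlen d s']
     | None =>
         forall s', is_SD_path e S D s' -> (hops s' <= v)%N ->
           thrT alpha lambda_e eps <= sqlen d s'
     end) ->
  let feasible := [set s | is_SD_path e S D s /\
                           sqlen d s < thrT alpha lambda_e eps] in
  let best := (\big[Order.max/-oo]_(1 <= v < #|V|)
                 Mt d alpha lambda_e eps (Lt v))%E in
  ereal_sup [set Mt d alpha lambda_e eps (Some s) | s in feasible] = best /\
  (forall v s, (1 <= v <= #|V| - 1)%N -> Lt v = Some s ->
     Mt d alpha lambda_e eps (Lt v) = best ->
     s \in feasible /\
     forall s', s' \in feasible ->
       (Mt d alpha lambda_e eps (Some s') <= Mt d alpha lambda_e eps (Some s))%E).
Proof.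
move=> alpha_gt2 _ eps_01 S_neq_D d_gt0 Lt_spec feasible best.
have range_V v : (1 <= v < #|V|)%N = (1 <= v <= #|V| - 1)%N by lia.
have Lt_feasible v s : (1 <= v <= #|V| - 1)%N -> Lt v = Some s -> feasible s.
  by move=> v_range Lt_v; move: (Lt_spec v v_range); rewrite Lt_v => -[].
have Lt_hops_dominates s : feasible s ->
    (Mt d alpha lambda_e eps (Some s) <= Mt d alpha lambda_e eps (Lt (hops s)))%E.
  case=> SDs s_lt; move: (Lt_spec _ (SD_path_hops_bounds S_neq_D SDs)).
  case: (Lt (hops s)) => [t [SDt hops_t _ t_min]|]; last first.
    by move=> /(_ s SDs (leqnn _)); rewrite leNgt s_lt.
  apply: Mt_le => //; first exact: lt_trans alpha_gt2.
  - by case/andP: (SD_path_hops_bounds S_neq_D SDt) => -> _.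
  - exact: (sqlen_SD_path_gt0 S_neq_D d_gt0 SDt).
  - exact: t_min.
have sup_best : ereal_sup [set Mt d alpha lambda_e eps (Some s) | s in feasible]
    = best.
  apply: ereal_sup_eq_bigmax => [v|s feasible_s].
    rewrite range_V => v_range; case Lt_v: (Lt v) => [t|]; last by left.
    by right; exists t => //; apply: Lt_feasible Lt_v.
  exists (hops s); last exact: Lt_hops_dominates.
  by rewrite range_V (SD_path_hops_bounds S_neq_D feasible_s.1).
split=> // v s v_range Lt_v Mt_best.
split=> [|s' /set_mem feasible_s']; first exact/mem_set/(Lt_feasible v).
by rewrite -Lt_v Mt_best -sup_best; apply: ereal_sup_ubound; exists s'.
Qed.
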